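(* Let $J=\{j_1<\dots<j_k\}\subseteq[n]$ with complement $[n]\setminus J=\{h_1<\dots<h_{n-k}\}$, and let $\psi:\mathbb{R}^n\to\mathbb{R}^n$ be the coordinate permutation $\psi(x_1,\dots,x_n)=(x_{h_1},\dots,x_{h_{n-k}},x_{j_1},\dots,x_{j_k})$. Then $\psi$ maps the bridge polytope $\mathrm{Br}_J$ isomorphically onto the Bruhat interval polytope $\mathsf{Q}_{e,\pi(J)^{-1}}$. More precisely, $\psi$ sends the vertex $(z(1),\dots,z(n))$, $z\in S_J$, to the point of the permutation $z\circ\pi(J)^{-1}$, and $z\mapsto z\circ\pi(J)^{-1}$ is a bijection from $S_J$ onto the strong Bruhat interval $[e,\pi(J)^{-1}]=\{w\in S_n: e\le w\le \pi(J)^{-1}\}$; in particular the vertices $\pi(J)$ and $e$ of $\mathrm{Br}_J$ go to $e$ and $\pi(J)^{-1}$ respectively.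
   Context: For $J\subseteq[n]$, $S_J=\{\pi\in S_n:\ \pi(j)\ge j \text{ for } j\in J,\ \pi(j)\le j \text{ for } j\notin J\}$ and $\mathrm{Br}_J=\operatorname{conv}\{(\pi(1),\dots,\pi(n)):\pi\in S_J\}\subset\mathbb{R}^n$. For $J=\{j_1<\dots<j_k\}$ with complement $\{h_1<\dots<h_{n-k}\}$, $\pi(J)\in S_n$ is the permutation with $\pi(J)(h_i)=i$ for $1\le i\le n-k$ and $\pi(J)(j_i)=n-k+i$ for $1\le i\le k$; thus $\pi(J)^{-1}=(h_1,\dots,h_{n-k},j_1,\dots,j_k)$ in one-line notation. For $u\le v$ in the strong Bruhat order on $S_n$, the Bruhat interval polytope is $\mathsf{Q}_{u,v}=\operatorname{conv}\{(z(1),\dots,z(n)): z\in S_n,\ u\le z\le v\}$, where $\le$ is the strong Bruhat order. *)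

From HB Require Import structures.
From mathcomp Require Import all_boot all_order all_algebra all_fingroup.
Set Implicit Arguments. Unset Strict Implicit. Unset Printing Implicit Defensive.
Import Order.TTheory GRing.Theory Num.Theory.

(* Conventions: [n] = {1..n} is encoded as 'I_n (0-based);  a permutation
   z : {perm 'I_n} represents the permutation i+1 |-> (z i)+1 of [n].
   MathComp composition: (s * t) x = t (s x), so  z o w  is  w * z. *)

Section Defs.
Variable n : nat.

Definition SJ (J : {set 'I_n}) : {set {perm 'I_n}} :=
  [set z : {perm 'I_n} | [forall j, if j \in J then j <= z j else z j <= j]].

(* one-line notation of pi(J)^{-1} = (h_1,...,h_{n-k}, j_1,...,j_k) *)
Definition oneline (J : {set 'I_n}) : seq 'I_n :=
  [seq i <- enum 'I_n | i \notin J] ++ [seq i <- enum 'I_n | i \in J].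

Lemma size_oneline J : size (oneline J) = n.
Proof.
rewrite size_cat !size_filter addnC.
have -> : count (fun i => i \notin J) (enum 'I_n) = count (predC (mem J)) (enum 'I_n) by [].
by rewrite count_predC size_enum_ord.
Qed.

Lemma mem_oneline J x : x \in oneline J.
Proof. rewrite mem_cat; case: (boolP (x \in J)) => h; apply/orP; [right|left]; rewrite mem_filter h /= mem_enum //. Qed.

Lemma index_oneline_lt J x : index x (oneline J) < n.
Proof. by rewrite -{2}(size_oneline J) index_mem mem_oneline. Qed.

Definition piJ_fun (J : {set 'I_n}) (x : 'I_n) : 'I_n :=
  Ordinal (index_oneline_lt J x).

Lemma piJ_fun_inj J : injective (piJ_fun J).
Proof.
move=> x y /(congr1 val) /= H.
exact: (index_inj x (mem_oneline J x) (mem_oneline J y) H).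
Qed.

Definition piJ (J : {set 'I_n}) : {perm 'I_n} := perm (@piJ_fun_inj J).

Definition ninv (w : {perm 'I_n}) : nat :=
  #|[set p : 'I_n * 'I_n | (p.1 < p.2) && (w p.2 < w p.1)]|.

Definition bruhat_step : rel {perm 'I_n} := fun u v =>
  [exists i : 'I_n, exists j : 'I_n,
     [&& i != j, v == (tperm i j * u)%g & ninv u < ninv v]].

Definition bruhat (u v : {perm 'I_n}) : bool := connect bruhat_step u v.

Local Open Scope ring_scope.
Variable R : realFieldType.

Definition pt (z : {perm 'I_n}) : 'rV[R]_n := \row_i ((z i).+1)%:R%R.

Definition conv_pts (A : {set {perm 'I_n}}) (x : 'rV[R]_n) : Prop :=
  exists lam : {perm 'I_n} -> R,
    [/\ forall z, (0 <= lam z)%R, forall z, z \notin A -> lam z = 0,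
        (\sum_z lam z = 1)%R & x = (\sum_z lam z *: pt z)%R].

Definition Br (J : {set 'I_n}) : 'rV[R]_n -> Prop := conv_pts (SJ J).

Definition bruhat_interval (u v : {perm 'I_n}) : {set {perm 'I_n}} :=
  [set z | bruhat u z && bruhat z v].

Definition QBr (u v : {perm 'I_n}) : 'rV[R]_n -> Prop :=
  conv_pts (bruhat_interval u v).

Definition psi (J : {set 'I_n}) (x : 'rV[R]_n) : 'rV[R]_n :=
  \row_i x ord0 (nth i (oneline J) i).

End Defs.

From HB Require Import structures.
From mathcomp Require Import all_boot all_order all_algebra all_fingroup.
From mathcomp Require Import zify.
Import Order.TTheory GRing.Theory Num.Theory.
Set Implicit Arguments. Unset Strict Implicit. Unset Printing Implicit Defensive.

(* The coordinate permutation psi is the column permutation by pi(J)^-1, so it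
   maps pt z to pt (pi(J)^-1 z) and carries convex hulls to convex hulls; what
   remains is the equality [e, pi(J)^-1] = pi(J)^-1 S_J of vertex sets.
   Downwards: pi(J) places the complement of J before J, so a Bruhat step down
   from v (exchanging two values of v into increasing order) keeps pi(J) v in
   S_J.  Upwards: for z in S_J with least moved point x, the transposition
   (x, z x) turns z x into a fixed point, keeps z in S_J and is a Bruhat step up
   from pi(J)^-1 z; induction on the number of inversions reaches pi(J)^-1.
   Every permutation lies above e by the same kind of induction. *)

Local Open Scope group_scope.

Lemma mulVg_tperm (T : finType) (s z : {perm T}) (x y : T) :
  s^-1 * (tperm x y * z) = tperm (s x) (s y) * (s^-1 * z).
Proof. by rewrite -tpermJ conjgE -!mulgA mulKVg. Qed.

Section Inversions.
Variable n : nat.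
Implicit Types (u v : {perm 'I_n}) (a b i j : 'I_n).

Definition invs v : {set 'I_n * 'I_n} :=
  [set p : 'I_n * 'I_n | (p.1 < p.2)%N && (v p.2 < v p.1)%N].

Lemma ltn_ninv_tperm v a b :
  (a < b)%N -> (v a < v b)%N -> (ninv v < ninv (tperm a b * v))%N.
Proof.
move=> ab vab; set t := tperm a b.
pose swap (p : 'I_n * 'I_n) := if (t p.1 < t p.2)%N then (t p.1, t p.2) else p.
have swap_inj : {in invs v &, injective swap}.
  move=> [p q] [p' q']; rewrite !inE /= => /andP[pq _] /andP[pq' _].
  rewrite /swap /=; case: ifP => h1; case: ifP => h2 [E1 E2].
  - by move: E1 E2 => /perm_inj -> /perm_inj ->.
  - by move: h2; rewrite -E1 -E2 !tpermK pq.
  - by move: h1; rewrite E1 E2 !tpermK pq'.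
  - by rewrite E1 E2.
rewrite /ninv -/(invs v) -/(invs _) -(card_in_imset swap_inj); apply: proper_card.
apply/properP; split.
  apply/subsetP => _ /imsetP[[p q] + ->]; rewrite !inE /= => /andP[pq vqp].
  rewrite /swap /= !permM; case: ifP => h /=; first by rewrite h !tpermK.
  (* [t] reverses the pair only if it meets [{a, b}], and [(a, b)] is no
     inversion of [v]. *)
  rewrite pq; move: h pq vqp; rewrite /t.
  by case: (tpermP a b p) => [->|->|/eqP pa /eqP pb];
     case: (tpermP a b q) => [->|->|/eqP qa /eqP qb] //= *; lia.
exists (a, b); first by rewrite inE /= ab !permM tpermL tpermR vab.
apply/imsetP => -[[p q]]; rewrite inE /= => /andP[pq vqp].
rewrite /swap /=; case: ifP => h [E1 E2].
  by move: pq; rewrite -(tpermK a b p) -(tpermK a b q) -/t -E1 -E2 /t tpermL tpermR; lia.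
by move: vqp; rewrite -E1 -E2 ltnNge ltnW.
Qed.

Lemma ltn_ninv_tpermE v a b :
  (a < b)%N -> (ninv v < ninv (tperm a b * v))%N = (v a < v b)%N.
Proof.
move=> ab; apply/idP/idP => [lt_ninv|]; last exact: ltn_ninv_tperm.
case: (ltngtP (v a) (v b)) => // [vba|/val_inj/perm_inj eab]; last by rewrite eab ltnn in ab.
have := @ltn_ninv_tperm (tperm a b * v) a b ab.
rewrite !permM tpermL tpermR mulgA tperm2 mul1g => /(_ vba).
by rewrite ltnNge ltnW.
Qed.

Lemma bruhat_stepP u v :
  reflect (exists i j, [/\ (i < j)%N, (u i < u j)%N & v = tperm i j * u])
          (bruhat_step u v).
Proof.
apply: (iffP existsP) => [[i /existsP[j /and3P[ij /eqP-> lt_ninv]]]|[i [j [ij uij ->]]]].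
  case: (ltngtP i j) => [lij|lji|/val_inj eij]; last by rewrite eij eqxx in ij.
    by exists i, j; rewrite -ltn_ninv_tpermE.
  by exists j, i; split=> //; [rewrite -ltn_ninv_tpermE // tpermC | rewrite tpermC].
exists i; apply/existsP; exists j.
by rewrite ltn_ninv_tpermE // uij andbT eqxx andbT neq_ltn ij.
Qed.

Lemma bruhat_step_tperm u i j :
  i != j -> (i < j)%N = (u i < u j)%N -> bruhat_step u (tperm i j * u).
Proof.
move=> ij lt_iff; apply/bruhat_stepP.
case: (ltngtP i j) lt_iff => [lij|lji|/val_inj eij]; last by rewrite eij eqxx in ij.
  by move=> /esym uij; exists i, j.
move=> /esym /negbT; rewrite -leqNgt leq_eqVlt => /orP[/eqP/val_inj/perm_inj eij|uji].
  by rewrite eij eqxx in ij.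
by exists j, i; rewrite tpermC.
Qed.

Lemma bruhat_step_ninv u v : bruhat_step u v -> (ninv u < ninv v)%N.
Proof. by case/bruhat_stepP => i [j [ij uij ->]]; rewrite ltn_ninv_tpermE. Qed.

Lemma ninv_max v : (ninv v <= n * n)%N.
Proof. by apply: leq_trans (max_card _) _; rewrite card_prod card_ord. Qed.

Lemma perm_least_moved (s : {perm 'I_n}) : s != 1 ->
  exists x : 'I_n, (x < s x)%N /\ forall t, s t != t -> (x <= t)%N.
Proof.
move=> s1; have [t0 st0] : exists t0, s t0 != t0.
  apply/existsP; apply: contraR s1 => /existsPn fix_s; apply/eqP/permP => t.
  by rewrite perm1; apply/eqP; move: (fix_s t); rewrite negbK.
case: (@arg_minnP _ t0 (fun t => s t != t) (fun t : 'I_n => nat_of_ord t) st0)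
  => x sx x_min.
exists x; split=> //; have ssx : s (s x) != s x by apply: contra sx => /eqP/perm_inj->.
by rewrite ltn_neqAle x_min // andbT; apply: contra sx => /eqP/val_inj<-.
Qed.

Lemma bruhat1x v : bruhat 1 v.
Proof.
have [k] := ubnP (ninv v); elim: k v => // k IH v lt_k.
have [->|v1] := eqVneq v 1; first exact: connect0.
have [x [xv x_min]] := perm_least_moved v1.
set y := v^-1 x; have vy : v y = x by rewrite permKV.
have yx : y != x by apply: contraTneq xv => yx; rewrite -{2}yx vy ltnn.
have xy : (x < y)%N by rewrite ltn_neqAle eq_sym yx; apply: x_min; rewrite vy eq_sym.
set u := tperm x y * v.
have vE : v = tperm x y * u by rewrite mulgA tperm2 mul1g.
(* [u] fixes [x], so [v] is one step above [u] *)
have step : bruhat_step u v.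
  by rewrite vE; apply: bruhat_step_tperm; rewrite 1?eq_sym // !permM tpermL tpermR vy xy xv.
apply: connect_trans (connect1 step); apply: IH.
by apply: leq_trans (bruhat_step_ninv step) _; rewrite -ltnS.
Qed.

End Inversions.

Section Bridge.
Variables (n : nat) (J : {set 'I_n}).
Implicit Types (v z : {perm 'I_n}) (x y : 'I_n).

Lemma piJE x : nat_of_ord (piJ J x) = index x (oneline J).
Proof. by rewrite permE. Qed.

Lemma nth_oneline (i : 'I_n) : nth i (oneline J) i = (piJ J)^-1 i.
Proof.
have idx : index ((piJ J)^-1 i) (oneline J) = i by rewrite -piJE permKV.
by rewrite -{1}idx nth_index // mem_oneline.
Qed.

Lemma index_filter_ord (P : pred 'I_n) x y : P x -> P y ->
  (index x [seq i <- enum 'I_n | P i] < index y [seq i <- enum 'I_n | P i])%N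
  = (x < y)%N.
Proof.
move=> Px Py; set s := [seq i <- _ | _].
have ltn_tr : transitive (fun x y : 'I_n => (x < y)%N) by move=> ???; apply: ltn_trans.
have s_sorted : sorted (fun x y : 'I_n => (x < y)%N) s.
  apply: (sorted_filter ltn_tr).
  by have := iota_ltn_sorted 0 n; rewrite -val_enum_ord sorted_map.
have mem_s t : P t -> t \in s by rewrite mem_filter mem_enum andbT.
have lt_index t t' : P t -> P t' -> (index t s < index t' s)%N -> (t < t')%N.
  by move=> Pt Pt'; apply: (sorted_ltn_index ltn_tr s_sorted); apply: mem_s.
apply/idP/idP; first exact: lt_index.
move=> xy; case: (ltngtP (index x s) (index y s)) => // [/(lt_index _ _ Py Px)|].
  by rewrite ltnNge ltnW.
by move/(index_inj x (mem_s x Px) (mem_s y Py)) => eqxy; rewrite eqxy ltnn in xy.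
Qed.

Lemma piJ_ltE x y :
  (piJ J x < piJ J y)%N = if (x \in J) == (y \in J) then (x < y)%N else y \in J.
Proof.
have memF (P : pred 'I_n) t : (t \in [seq i <- enum 'I_n | P i]) = P t.
  by rewrite mem_filter mem_enum andbT.
rewrite !piJE /oneline !index_cat !memF.
case xJ: (x \in J); case yJ: (y \in J) => /=.
- by rewrite ltn_add2l index_filter_ord.
- by rewrite ltnNge (leq_trans (ltnW _) (leq_addr _ _)) // index_mem memF yJ.
- by rewrite (leq_trans _ (leq_addr _ _)) // index_mem memF xJ.
- by rewrite index_filter_ord ?xJ ?yJ.
Qed.

Lemma SJP z :
  reflect (forall x, if x \in J then (x <= z x)%N else (z x <= x)%N) (z \in SJ J).
Proof. by rewrite inE; apply: forallP. Qed.

Lemma SJ1 : 1 \in SJ J.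
Proof. by apply/SJP => x; rewrite perm1; case: (x \in J). Qed.

Lemma SJ_tperm x y z : (piJ J x < piJ J y)%N -> (z x < z y)%N ->
  tperm x y * z \in SJ J -> z \in SJ J.
Proof.
rewrite piJ_ltE => pxy zxy /SJP SJz'.
have := SJz' x; have := SJz' y; rewrite !permM tpermL tpermR => SJy SJx.
apply/SJP => t; have := SJz' t; rewrite permM.
case: tpermP => [->|->|/eqP tx /eqP ty] // _; move: pxy SJx SJy.
all: by case: (x \in J); case: (y \in J) => //= *; lia.
Qed.

Lemma bruhat_piJV_SJ v : bruhat v (piJ J)^-1 -> piJ J * v \in SJ J.
Proof.
case/connectP => s; elim: s v => [|v' s IH] v /=; first by move=> _ <-; rewrite mulgV SJ1.
case/andP => /bruhat_stepP[i [j [ij vij ->]]] path_s last_s.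
have := IH _ path_s last_s; rewrite -[piJ J]invgK mulVg_tperm invgK => SJz'.
by apply: SJ_tperm SJz'; rewrite ?permM !(permKV (piJ J)).
Qed.

Lemma SJ_bruhat_step_up z : z \in SJ J -> z != 1 ->
  exists2 z', z' \in SJ J & bruhat_step ((piJ J)^-1 * z) ((piJ J)^-1 * z').
Proof.
move=> /SJP SJz z1; have [x [xz x_min]] := perm_least_moved z1.
have xJ : x \in J by move: (SJz x) xz; case: (x \in J) => // zxx; rewrite ltnNge zxx.
set c := z x; set d := z c.
have cx : c != x by rewrite neq_ltn xz orbT.
have dc : d != c by apply: contra cx => /eqP/perm_inj->.
have xd : (x <= d)%N by apply: x_min; apply: contra dc => /eqP/perm_inj->.
exists (tperm x c * z).
  apply/SJP => t; rewrite permM; case: tpermP => [->|->|/eqP tx /eqP tc].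
  - by rewrite xJ.
  - by case: (c \in J).
  - exact: SJz.
rewrite -[X in X * (_ * _)]invgK mulVg_tperm invgK.
apply: bruhat_step_tperm; first by rewrite (inj_eq perm_inj) eq_sym.
rewrite !permM !permK piJ_ltE xJ eq_sym; have := SJz c.
by case: (c \in J) => SJc /=; [rewrite xz ltn_neqAle eq_sym dc SJc | rewrite ltnNge SJc].
Qed.

Lemma SJ_bruhat_piJV z : z \in SJ J -> bruhat ((piJ J)^-1 * z) (piJ J)^-1.
Proof.
have [k] := ubnP (n * n - ninv ((piJ J)^-1 * z)); elim: k z => // k IH z lt_k SJz.
have [->|z1] := eqVneq z 1; first by rewrite mulg1; apply: connect0.
have [z' SJz' step] := SJ_bruhat_step_up SJz z1.
apply: connect_trans (connect1 step) (IH z' _ SJz').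
have := bruhat_step_ninv step; have := ninv_max ((piJ J)^-1 * z'); lia.
Qed.

Lemma bruhat_interval_piJV :
  bruhat_interval 1 (piJ J)^-1 = (piJ J)^-1 *: SJ J.
Proof.
apply/setP => v; rewrite mem_lcoset invgK inE bruhat1x /=.
apply/idP/idP; first exact: bruhat_piJV_SJ.
by move=> /SJ_bruhat_piJV; rewrite mulKg.
Qed.

End Bridge.

Section Polytopes.
Variables (R : realFieldType) (n : nat).
Local Open Scope ring_scope.

Lemma col_perm_pt (s z : {perm 'I_n}) : col_perm s (pt R z) = pt R (s * z)%g.
Proof. by apply/rowP => i; rewrite !mxE permM. Qed.

Lemma conv_pts_lcoset (s : {perm 'I_n}) (A : {set {perm 'I_n}}) y :
  @conv_pts n R (s *: A)%g y <-> exists x, conv_pts A x /\ y = col_perm s x.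
Proof.
have reindex (F : {perm 'I_n} -> 'rV[R]_n) : \sum_z F z = \sum_z F (s * z)%g.
  exact: reindex_inj (mulgI s).
split=> [[lam [lam_ge0 lam_out lam_sum ->]] | [_ [[lam [lam_ge0 lam_out lam_sum ->]] ->]]].
  exists (\sum_z lam (s * z)%g *: pt R z); split.
    exists (fun z => lam (s * z)%g); split=> //.
    - by move=> z zA; apply: lam_out; rewrite mem_lcoset mulKg.
    - by rewrite -lam_sum [RHS](reindex_inj (mulgI s)).
  by rewrite linear_sum reindex; apply: eq_bigr => z _; rewrite linearZ /= col_perm_pt.
exists (fun v => lam (s^-1 * v)%g); split=> //.
- by move=> v vA; apply: lam_out; rewrite -mem_lcoset.
- by rewrite -lam_sum (reindex_inj (mulgI s)); apply: eq_bigr => z _; rewrite mulKg.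
rewrite linear_sum [RHS]reindex; apply: eq_bigr => z _.
by rewrite linearZ /= col_perm_pt mulKg.
Qed.

Lemma psi_col_perm (J : {set 'I_n}) (x : 'rV[R]_n) :
  psi J x = col_perm (piJ J)^-1 x.
Proof. by apply/rowP => i; rewrite !mxE nth_oneline. Qed.

End Polytopes.

Theorem lemma4p2 (R : realFieldType) (n : nat) (J : {set 'I_n}) :
  [/\ injective (@psi n R J),
      (forall y : 'rV[R]_n,
         @QBr n R 1%g (piJ J)^-1%g y <-> exists x, @Br n R J x /\ y = psi J x),
      (forall z : {perm 'I_n}, z \in SJ J ->
         psi J (@pt n R z) = @pt n R ((piJ J)^-1 * z)%g),
      {in SJ J &, injective (fun z : {perm 'I_n} => ((piJ J)^-1 * z)%g)} &
      [set ((piJ J)^-1 * z)%g | z in SJ J] = bruhat_interval 1%g (piJ J)^-1%g]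
  /\
  [/\ piJ J \in SJ J, (1%g : {perm 'I_n}) \in SJ J,
      psi J (@pt n R (piJ J)) = @pt n R 1%g &
      psi J (@pt n R 1%g) = @pt n R (piJ J)^-1%g].
Proof.
have psi_pt z : psi J (pt R z) = pt R ((piJ J)^-1 * z).
  by rewrite psi_col_perm col_perm_pt.
split; split.
- move=> x y; rewrite !psi_col_perm => /(congr1 (col_perm (piJ J))).
  by rewrite -!col_permM mulgV !col_perm1.
- move=> y; rewrite /QBr bruhat_interval_piJV conv_pts_lcoset.
  by split=> -[x [Brx ->]]; exists x; rewrite psi_col_perm.
- by move=> z _; apply: psi_pt.
- by move=> z1 z2 _ _; apply: mulgI.
- by rewrite bruhat_interval_piJV -lcosetE.
- have := mem_lcoset (SJ J) (piJ J)^-1 1.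
  by rewrite -bruhat_interval_piJV inE !bruhat1x invgK mulg1 => <-.
- exact: SJ1.
- by rewrite psi_pt mulVg.
- by rewrite psi_pt mulg1.
Qed.
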